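(* For every tree $T$ of order $n\ge 2$ that is not isomorphic to the star $K_{1,n-1}$, $\gamma_{rdR}(T)\ge n+2$.
   Context: All graphs are finite and simple. An RDRD function of $G$ is a function $f:V(G)\to\{0,1,2,3\}$ such that every vertex with value $0$ has at least two neighbors with value $2$ or at least one neighbor with value $3$, every vertex with value $1$ has a neighbor with value $2$ or $3$, and the subgraph induced by the vertices with value $0$ has no isolated vertices; $\gamma_{rdR}(G)$ is the minimum of $\sum_v f(v)$ over RDRD functions. *)

From mathcomp Require Import all_boot.
Set Implicit Arguments. Unset Strict Implicit. Unset Printing Implicit Defensive.

Definition simple_graph (T : finType) (e : rel T) : Prop :=
  symmetric e /\ irreflexive e.

(* A tree: a connected simple graph with |V| - 1 edges.
   Edges are counted as ordered adjacent pairs, so there are 2(|V|-1). *)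
Definition is_tree (T : finType) (e : rel T) : Prop :=
  simple_graph e /\
  (forall x y : T, connect e x y) /\
  #|[set p : T * T | e p.1 p.2]| = 2 * (#|T| - 1).

Definition star_rel (n : nat) : rel 'I_n :=
  fun i j => ((val i == 0) && (val j != 0)) || ((val j == 0) && (val i != 0)).

Definition graph_iso (T T' : finType) (e : rel T) (e' : rel T') : Prop :=
  exists h : T -> T', bijective h /\ forall x y, e x y = e' (h x) (h y).

Definition is_RDRD (T : finType) (e : rel T) (f : {ffun T -> 'I_4}) : bool :=
  [forall v,
    ((val (f v) == 0) ==>
       ((2 <= #|[set u | e v u & val (f u) == 2]|) ||
        [exists u, e v u && (val (f u) == 3)])) &&
    ((val (f v) == 1) ==> [exists u, e v u && (2 <= val (f u))]) &&
    ((val (f v) == 0) ==> [exists u, e v u && (val (f u) == 0)])].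

Definition weight (T : finType) (f : {ffun T -> 'I_4}) : nat :=
  \sum_(v : T) val (f v).

(* gamma_rdR: minimum weight of an RDRD function.  The constant-3 function
   is always RDRD and has weight 3|T|, so 3|T| is a correct neutral start. *)
Definition gamma_rdR (T : finType) (e : rel T) : nat :=
  \big[minn/(3 * #|T|)]_(f : {ffun T -> 'I_4} | is_RDRD e f) weight f.

From mathcomp Require Import all_boot perm zify.
Set Implicit Arguments. Unset Strict Implicit. Unset Printing Implicit Defensive.

(* Every RDRD function f of a tree T of order n that is not a star has weight
   at least n + 2.  Write a_v = f v, N0 for the number of vertices with a_v = 0
   and B = sum_v (a_v - 1)^+ for the total "excess".  Then
   weight f + N0 = n + B, so it suffices to show N0 + 2 <= B.
   - If N0 = 0 and B <= 1, exactly one vertex c carries a value >= 2 and every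
     other vertex has value 1, hence must be adjacent to c: T is a star.
   - If N0 > 0, every zero vertex demands excess >= 2 from its neighbours;
     double counting these demands and comparing with the number of edges
     inside the set of zeros and "hubs" (vertices with positive excess and a
     zero neighbour), which is at most one less than its size because T is a
     tree, yields N0 + 2 <= B. *)

(* Number of ordered adjacent pairs inside S, i.e. twice the number of edges
   of the subgraph induced by S. *)
Definition inner_edges (T : finType) (e : rel T) (S : {set T}) : nat :=
  \sum_(v in S) \sum_(w in S) (e v w : nat).

Lemma inner_edgesT (T : finType) (e : rel T) :
  inner_edges e setT = #|[set p : T * T | e p.1 p.2]|.
Proof.
rewrite /inner_edges pair_big /= -sum1_card [RHS]big_mkcond /=.
by apply: eq_big => [[u w]|[u w] _]; rewrite !inE //; case: (e u w).
Qed.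

Lemma exit_edge (T : finType) (e : rel T) (S : {set T}) :
  symmetric e -> (forall x y, connect e x y) -> S != set0 -> S != setT ->
  exists s v, [/\ s \in S, v \notin S & e s v].
Proof.
move=> esym con /set0Pn[s sS]; rewrite -subTset => /subsetPn[v _ vS].
case: (pickP [pred p : T * T | [&& p.1 \in S, p.2 \notin S & e p.1 p.2]]).
  by move=> [s' v'] /and3P[s'S v'S esv]; exists s', v'.
move=> noexit; have cl : closed e (mem S).
  move=> x y exy; apply/idP/idP => [xS|yS]; apply/negPn/negP => nS.
  - by have := noexit (x, y); rewrite /= xS nS exy.
  - by have := noexit (y, x); rewrite /= yS nS esym exy.
by have := closed_connect cl (con s v); rewrite sS (negbTE vS).
Qed.

Lemma inner_edges_setU1 (T : finType) (e : rel T) (S : {set T}) v :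
  symmetric e -> v \notin S ->
  inner_edges e S + 2 * \sum_(w in S) (e v w : nat) <= inner_edges e (v |: S).
Proof.
move=> esym vS; rewrite /inner_edges big_setU1 //=.
have row u : \sum_(w in v |: S) (e u w : nat) = e u v + \sum_(w in S) (e u w : nat).
  by rewrite big_setU1.
rewrite row (eq_bigr _ (fun u _ => row u)) big_split /=.
have deg : \sum_(u in S) (e u v : nat) = \sum_(w in S) (e v w : nat).
  by apply: eq_bigr => u _; rewrite esym.
lia.
Qed.

(* Growing a nonempty S to the whole connected graph one adjacent vertex at a
   time adds at least one edge per new vertex. *)
Lemma inner_edges_growth (T : finType) (e : rel T) (S : {set T}) :
  symmetric e -> (forall x y, connect e x y) -> S != set0 ->
  inner_edges e S + 2 * (#|T| - #|S|) <= inner_edges e setT.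
Proof.
move=> esym con; move Hk: (#|T| - #|S|) => k.
elim: k S Hk => [|k IH] S Hk Sne.
  have -> : S = setT by apply/eqP; rewrite eqEcard subsetT cardsT; lia.
  by rewrite addn0.
have SneT : S != setT by apply/eqP => SeT; move: Hk; rewrite SeT cardsT subnn.
have [s [v [sS vS esv]]] := exit_edge esym con Sne SneT.
have vSne : v |: S != set0 by apply/set0Pn; exists v; rewrite setU11.
have := IH (v |: S); rewrite cardsU1 vS => /(_ _ vSne); have := inner_edges_setU1 esym vS.
have : 0 < \sum_(w in S) (e v w : nat) by rewrite (bigD1 s sS) /= esym esv.
lia.
Qed.

Lemma tree_inner_edges (T : finType) (e : rel T) (S : {set T}) :
  is_tree e -> S != set0 -> inner_edges e S <= 2 * (#|S| - 1).
Proof.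
move=> [[esym _] [con ecard]] Sne.
have := inner_edges_growth esym con Sne; rewrite inner_edgesT ecard.
have := max_card S; have : 0 < #|S| by rewrite card_gt0.
lia.
Qed.

Lemma leq_sum_pair (I : finType) (P : pred I) (g : I -> nat) i j :
  P i -> P j -> i != j -> g i + g j <= \sum_(k | P k) g k.
Proof.
move=> Pi Pj ij; rewrite (bigD1 i Pi) leq_add2l (bigD1 j) /=; first exact: leq_addr.
by rewrite Pj eq_sym.
Qed.

(* A tree has no triangle: three mutually adjacent vertices would induce three
   edges on three vertices. *)
Lemma tree_no_triangle (T : finType) (e : rel T) c x y :
  is_tree e -> e c x -> e c y -> e x y -> False.
Proof.
move=> tr ecx ecy exy; have [[esym eirr] _] := tr.
have neq u v : e u v -> u != v by apply: contraTneq => ->; rewrite eirr.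
pose S := [set c; x; y].
have deg2 u w1 w2 : e u w1 -> e u w2 -> w1 != w2 -> w1 \in S -> w2 \in S ->
    2 <= \sum_(w in S) (e u w : nat).
  move=> e1 e2 w12 w1S w2S.
  by have := leq_sum_pair (fun w => (e u w : nat)) w1S w2S w12; rewrite /= e1 e2.
have [cS xS yS] : [/\ c \in S, x \in S & y \in S] by rewrite !inE !eqxx ?orbT.
have : \sum_(v in S) 2 <= inner_edges e S.
  apply: leq_sum => v; rewrite !inE => /orP[/orP[]|] /eqP->.
  - exact: (deg2 _ x y ecx ecy (neq _ _ exy)).
  - by apply: (deg2 _ c y _ exy (neq _ _ ecy)); rewrite // esym.
  - by apply: (deg2 _ c x _ _ (neq _ _ ecx)); rewrite // esym.
have Sne : S != set0 by apply/set0Pn; exists c; rewrite !inE eqxx.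
have := tree_inner_edges tr Sne; rewrite sum_nat_const.
have : 0 < #|S| by rewrite card_gt0.
lia.
Qed.

(* A tree with a vertex c adjacent to all others is the star K_{1,n-1}: the
   isomorphism sends c to 0 via a transposition of the enumeration. *)
Lemma universal_vertex_star (T : finType) (e : rel T) (c : T) :
  is_tree e -> (forall u, u != c -> e u c) -> graph_iso e (@star_rel #|T|).
Proof.
move=> tr cuniv; have [[esym eirr] _] := tr.
have n0 : 0 < #|T| by apply/card_gt0P; exists c.
pose h := tperm (enum_rank c) (Ordinal n0) \o enum_rank.
have h_center x : (val (h x) == 0) = (x == c).
  have -> : (val (h x) == 0) = (h x == h c) by rewrite /h /= tpermL.
  by rewrite inj_eq //; apply: inj_comp; [exact: perm_inj | exact: enum_rank_inj].
exists h; split.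
  by apply: bij_comp; [apply: injF_bij; exact: perm_inj | exact: enum_rank_bij].
move=> x y; rewrite /star_rel !h_center.
case: (eqVneq x c) => [->|xc]; case: (eqVneq y c) => [->|yc] /=.
- by rewrite eirr.
- by rewrite esym cuniv.
- by rewrite cuniv.
apply/negP => exy.
by apply: (tree_no_triangle (c := c) tr _ _ exy); rewrite esym cuniv.
Qed.

Lemma double_count (T : finType) (e : rel T) (P Q : T -> nat) : symmetric e ->
  \sum_v P v * \sum_w (e v w : nat) * Q w = \sum_w Q w * \sum_v (e w v : nat) * P v.
Proof.
move=> esym.
under eq_bigr => v _ do rewrite big_distrr.
rewrite exchange_big /=; apply: eq_bigr => w _; rewrite big_distrr.
by apply: eq_bigr => v _; rewrite esym /=; lia.
Qed.

Section Accounting.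
Variables (T : finType) (e : rel T) (f : {ffun T -> 'I_4}).

Definition zero v : bool := val (f v) == 0.
Definition exc v : nat := (val (f v)).-1.
Definition zdeg u : nat := \sum_w (e u w : nat) * zero w.
Definition hub u : bool := (0 < exc u) && (0 < zdeg u).

Lemma weight_balance : weight f + \sum_v (zero v : nat) = #|T| + \sum_v exc v.
Proof.
rewrite /weight -sum1_card -!big_split /=; apply: eq_bigr => v _.
by rewrite /zero /exc; case: (f v) => [[|k] ?] /=; lia.
Qed.

Lemma hub_not_zero v : hub v -> ~~ zero v.
Proof. by rewrite /hub /exc /zero; case: (val (f v)). Qed.

Lemma exc_le2 v : exc v <= 2.
Proof. by rewrite /exc; case: (f v) => k /=; lia. Qed.

(* Pointwise estimate behind the main count: since exc u <= 2, a hub u with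
   d zero neighbours satisfies exc u * d + 2 <= exc u + 2 * d. *)
Lemma hub_trade u : exc u * zdeg u + 2 * hub u <= exc u + 2 * (hub u * zdeg u).
Proof.
have := exc_le2 u; rewrite /hub.
have [->|bpos] := posnP (exc u); first by [].
have [->|dpos] := posnP (zdeg u); first by rewrite muln0.
rewrite /= !mul1n; nia.
Qed.

Hypothesis fRD : is_RDRD e f.

Lemma rdrd_zero v : zero v ->
  (2 <= #|[set u | e v u & val (f u) == 2]|) || [exists u, e v u && (val (f u) == 3)].
Proof. by move: fRD => /forallP/(_ v)/andP[/andP[/implyP C _] _]. Qed.

Lemma rdrd_one v : val (f v) == 1 -> [exists u, e v u && (2 <= val (f u))].
Proof. by move: fRD => /forallP/(_ v)/andP[/andP[_ /implyP C] _]. Qed.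

Lemma rdrd_zero_zero v : zero v -> [exists u, e v u && zero u].
Proof. by move: fRD => /forallP/(_ v)/andP[_ /implyP C]. Qed.

Lemma zero_demand v : zero v -> 2 <= \sum_u (e v u : nat) * exc u.
Proof.
move=> /rdrd_zero /orP[two2|/existsP[u /andP[evu fu3]]].
  apply: leq_trans two2 _; rewrite -sum1_card big_mkcond /=.
  apply: leq_sum => u _; rewrite inE /exc.
  by case: (e v u) => //=; case: eqP => // ->.
by rewrite (bigD1 u) //= evu /exc (eqP fu3) /= add2n.
Qed.

Lemma zero_zdeg v : zero v -> 0 < zdeg v.
Proof.
by move=> /rdrd_zero_zero/existsP[u /andP[evu zu]]; rewrite /zdeg (bigD1 u) //= evu zu.
Qed.

(* The set of zeros and hubs; its induced subgraph is a forest. *)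
Definition core : {set T} := [set v | zero v || hub v].

Lemma card_core : #|core| = \sum_v (zero v : nat) + \sum_v (hub v : nat).
Proof.
rewrite -sum1_card big_mkcond -big_split /=; apply: eq_bigr => v _; rewrite inE.
by have := @hub_not_zero v; case: (zero v); case: (hub v) => // /(_ isT).
Qed.

Lemma core_row v : \sum_(w in core) (e v w : nat) = zdeg v + \sum_w (e v w : nat) * hub w.
Proof.
rewrite /zdeg big_mkcond -big_split /=; apply: eq_bigr => w _; rewrite inE.
by have := @hub_not_zero w; case: (zero w); case: (hub w); case: (e v w) => // /(_ isT).
Qed.

Hypothesis esym : symmetric e.

(* Each zero has a zero neighbour and each zero-hub edge is counted from both
   ends, so the core carries at least N0 + 2 * (zero-hub edges) inner pairs. *)
Lemma core_inner_edges :
  \sum_v (zero v : nat) + 2 * \sum_u hub u * zdeg u <= inner_edges e core.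
Proof.
have hub_zero : \sum_v zero v * \sum_w (e v w : nat) * hub w = \sum_u hub u * zdeg u.
  by rewrite double_count.
apply: (@leq_trans (\sum_v (zero v + zero v * \sum_w (e v w : nat) * hub w + hub v * zdeg v))).
  by rewrite !big_split /= hub_zero; lia.
rewrite /inner_edges [X in _ <= X]big_mkcond /=; apply: leq_sum => v _; rewrite core_row inE.
by have := @hub_not_zero v; have := @zero_zdeg v; case: (zero v); case: (hub v) => //=; lia.
Qed.

Lemma zeros_excess_bound : is_tree e -> 0 < \sum_v (zero v : nat) ->
  \sum_v (zero v : nat) + 2 <= \sum_v exc v.
Proof.
move=> tree_e N0pos.
have demand : 2 * \sum_v (zero v : nat) <= \sum_u exc u * zdeg u.
  rewrite big_distrr /= -double_count //; apply: leq_sum => v _.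
  by case zv: (zero v); rewrite ?muln0 // mul1n zero_demand.
have trade : \sum_u exc u * zdeg u + 2 * \sum_u (hub u : nat)
             <= \sum_u exc u + 2 * \sum_u hub u * zdeg u.
  by rewrite !big_distrr -!big_split; apply: leq_sum => u _; exact: hub_trade.
have core_ne : core != set0.
  have [v zv] : exists v, zero v.
    apply/existsP; apply: contraTT N0pos => /existsPn nz.
    by rewrite lt0n negbK big1 // => v _; rewrite (negbTE (nz v)).
  by apply/set0Pn; exists v; rewrite inE zv.
have := tree_inner_edges tree_e core_ne; have := core_inner_edges; rewrite card_core.
lia.
Qed.

(* Without zeros and with B <= 1, a single vertex has value >= 2 and it
   dominates every vertex of value 1, i.e. every other vertex. *)
Lemma low_excess_universal : 0 < #|T| -> (forall v, ~~ zero v) -> \sum_v exc v <= 1 ->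
  exists c, forall u, u != c -> e u c.
Proof.
move=> n0 nz low.
have pair u v : u != v -> exc u + exc v <= 1.
  by move=> uv; apply: leq_trans low; exact: (@leq_sum_pair _ xpredT).
have dominated v : exc v = 0 -> exists2 u, e v u & 0 < exc u.
  have := nz v; rewrite /zero /exc => fv0 fv1.
  have /rdrd_one/existsP[u /andP[evu fu2]] : val (f v) == 1 by move: fv0 fv1; lia.
  by exists u; rewrite // /exc; lia.
have [c cpos] : exists c, 0 < exc c.
  have /card_gt0P[v _] := n0; have [v0|vpos] := posnP (exc v); last by exists v.
  by have [u _ upos] := dominated v v0; exists u.
exists c => u uc; have [w euw wpos] : exists2 w, e u w & 0 < exc w.
  by apply: dominated; have := pair u c uc; lia.
case: (eqVneq w c) => [<- //|wc].
by have := pair w c wc; lia.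
Qed.

End Accounting.

Lemma rdrd_weight_bound (T : finType) (e : rel T) (f : {ffun T -> 'I_4}) :
  is_tree e -> 0 < #|T| -> ~ graph_iso e (@star_rel #|T|) -> is_RDRD e f ->
  #|T| + 2 <= weight f.
Proof.
move=> tree_e n0 not_star fRD; have [[esym _] _] := tree_e.
suff : \sum_v (zero f v : nat) + 2 <= \sum_v exc f v by have := weight_balance f; lia.
have [N0|N0pos] := posnP (\sum_v (zero f v : nat));
  last exact: (zeros_excess_bound fRD esym tree_e N0pos).
rewrite N0 leqNgt; apply/negP => low; apply: not_star.
have nz v : ~~ zero f v by apply/negP => zv; move: N0; rewrite (bigD1 v) //= zv.
have [c cuniv] := low_excess_universal fRD n0 nz low.
exact: universal_vertex_star tree_e cuniv.
Qed.

Theorem theorem3p1 (T : finType) (e : rel T) :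
  is_tree e -> 2 <= #|T| ->
  ~ graph_iso e (@star_rel #|T|) ->
  #|T| + 2 <= gamma_rdR e.
Proof.
move=> tree_e n2 not_star; apply: (big_ind (fun m => #|T| + 2 <= m)).
- lia.
- by move=> x y hx hy; rewrite leq_min hx hy.
- by move=> f fRD; apply: (rdrd_weight_bound tree_e _ not_star fRD); lia.
Qed.
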